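(* For every strictly positive formula $A$ and every $\alpha\le\omega$, $A\nvdash_{\mathbf{RC\omega}}\alpha A$.
   Context: Strictly positive formulas: $A::= p\mid \top\mid (A\land B)\mid \alpha A$, $\alpha\le\omega$. $\mathbf{RC\omega}$: $A\vdash A$; $A\vdash\top$; cut; $A\land B\vdash A$; $A\land B\vdash B$; from $A\vdash B$, $A\vdash C$ infer $A\vdash B\land C$; from $A\vdash B$ infer $\alpha A\vdash\alpha B$; $\alpha\alpha A\vdash\alpha A$; $\alpha\beta A\vdash\beta A$, $\beta\alpha A\vdash\beta A$ for $\alpha\ge\beta$; $\alpha A\land\beta B\vdash\alpha(A\land\beta B)$ for $\alpha>\beta$; $\alpha A\vdash\beta A$ for $\alpha>\beta$; $\omega A\vdash A$. *)

From Stdlib Require Import Arith.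

(* Modality indices: ordinals alpha <= omega, i.e. natural numbers n < omega
   (Fin n) or omega itself (Om). *)
Inductive idx : Type :=
| Fin : nat -> idx
| Om : idx.

Definition idx_lt (a b : idx) : Prop :=
  match a, b with
  | Fin m, Fin n => m < n
  | Fin _, Om => True
  | Om, _ => False
  end.

Definition idx_le (a b : idx) : Prop := idx_lt a b \/ a = b.

Inductive fml : Type :=
| Var : nat -> fml
| Top : fml
| And : fml -> fml -> fml
| Dia : idx -> fml -> fml.

Inductive RC : fml -> fml -> Prop :=
| rc_refl : forall A, RC A A
| rc_top : forall A, RC A Top
| rc_cut : forall A B C, RC A B -> RC B C -> RC A C
| rc_andL1 : forall A B, RC (And A B) A
| rc_andL2 : forall A B, RC (And A B) B
| rc_andR : forall A B C, RC A B -> RC A C -> RC A (And B C)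
| rc_mono : forall a A B, RC A B -> RC (Dia a A) (Dia a B)
| rc_trans : forall a A, RC (Dia a (Dia a A)) (Dia a A)
| rc_absL : forall a b A, idx_le b a -> RC (Dia a (Dia b A)) (Dia b A)
| rc_absR : forall a b A, idx_le b a -> RC (Dia b (Dia a A)) (Dia b A)
| rc_poly : forall a b A B, idx_lt b a ->
    RC (And (Dia a A) (Dia b B)) (Dia a (And A (Dia b B)))
| rc_monot : forall a b A, idx_lt b a -> RC (Dia a A) (Dia b A)
| rc_omega : forall A, RC (Dia Om A) A.

From Stdlib Require Import List Arith Lia.
Import ListNotations.

(* The proof is semantic.  Formulas are interpreted in Kripke frames with a
   relation R_b for every index b, all variables true; soundness holds for any
   frame in which R_a is contained in R_b for b <= a, every R_b is transitive,
   and the polygon condition (R_a s t, R_b s z, b < a  imply  R_b t z) holds.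

   Given A, we build a frame of paths through A: a world is a list of pairs
   (b, C) descending from A, each C being a top-level diamond conjunct <b>C of
   the previous formula.  A path t is R_b-reachable from s when t is obtained
   from s by replacing a suffix with indices > b by a nonempty suffix with
   indices >= b.  The root [] forces A; but by induction on formulas no proper
   extension of a path ending at F forces F again, since an R_b step can never
   remove the entry (b, C) that led to the witness of <b>C.  Hence the root
   does not force <a>A, and soundness rules out A |- <a>A. *)

Lemma idx_lt_trans a b c : idx_lt a b -> idx_lt b c -> idx_lt a c.
Proof. destruct a, b, c; simpl; auto; try lia; tauto. Qed.

Lemma idx_lt_irrefl a : ~ idx_lt a a.
Proof. destruct a; simpl; auto; lia. Qed.

Lemma idx_le_trans a b c : idx_le a b -> idx_le b c -> idx_le a c.
Proof.
  unfold idx_le; intros [H|H] [H'|H']; subst; auto.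
  left; eapply idx_lt_trans; eauto.
Qed.

Lemma idx_lt_le_trans a b c : idx_lt a b -> idx_le b c -> idx_lt a c.
Proof. intros H [H'|H']; subst; auto; eapply idx_lt_trans; eauto. Qed.

Lemma idx_le_lt_trans a b c : idx_le a b -> idx_lt b c -> idx_lt a c.
Proof. intros [H|H] H'; subst; auto; eapply idx_lt_trans; eauto. Qed.

Lemma idx_le_Om a : idx_le a Om.
Proof. destruct a; [left; simpl; auto | right; auto]. Qed.

Fixpoint diamonds (F : fml) : list (idx * fml) :=
  match F with
  | Var _ | Top => []
  | And B C => diamonds B ++ diamonds C
  | Dia b B => [(b, B)]
  end.

Section Semantics.

Variable W : Type.
Variable R : idx -> W -> W -> Prop.

Hypothesis R_antimono : forall a b s t, idx_le b a -> R a s t -> R b s t.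
Hypothesis R_trans : forall b s t z, R b s t -> R b t z -> R b s z.
Hypothesis R_poly :
  forall a b s t z, idx_lt b a -> R a s t -> R b s z -> R b t z.

Fixpoint forces (s : W) (F : fml) : Prop :=
  match F with
  | Var _ | Top => True
  | And B C => forces s B /\ forces s C
  | Dia b B => exists t, R b s t /\ forces t B
  end.

Lemma forces_diamonds s F b C :
  forces s F -> In (b, C) (diamonds F) -> forces s (Dia b C).
Proof.
  induction F; simpl; try tauto.
  - intros [H1 H2] Hin; apply in_app_or in Hin as [H|H];
      [apply IHF1 | apply IHF2]; auto.
  - intros H [E|[]]; inversion E; subst; auto.
Qed.

(* Forcing is inherited backwards along R_omega; this validates <omega>A |- A
   (variables being true everywhere). *)
Lemma forces_omega s t B : R Om s t -> forces t B -> forces s B.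
Proof.
  intros Rst; induction B; simpl; auto.
  - intros [H1 H2]; auto.
  - intros [z [Rtz Hz]]; exists z; split; auto.
    eapply R_trans; [|exact Rtz]; eapply R_antimono; [apply idx_le_Om|exact Rst].
Qed.

Theorem soundness B C : RC B C -> forall s, forces s B -> forces s C.
Proof.
  induction 1; intros s Hs; simpl in *; auto; try tauto.
  - destruct Hs as [t [Rst Ht]]; exists t; auto.
  - destruct Hs as [t [Rst [z [Rtz Hz]]]]; exists z; split; eauto.
  - destruct Hs as [t [Rst [z [Rtz Hz]]]]; exists z; split; auto.
    eapply R_trans; [eapply R_antimono|]; eauto.
  - destruct Hs as [t [Rst [z [Rtz Hz]]]]; exists z; split; auto.
    eapply R_trans; [|eapply R_antimono]; eauto.
  - destruct Hs as [[t [Rst Ht]] [z [Rsz Hz]]].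
    exists t; repeat split; auto; exists z; split; eauto.
  - destruct Hs as [t [Rst Ht]]; exists t; split; auto.
    eapply R_antimono; [left|]; eauto.
  - destruct Hs as [t [Rst Ht]]; eapply forces_omega; eauto.
Qed.

End Semantics.

Section PathModel.

Variable A0 : fml.

Fixpoint path (F : fml) (p : list (idx * fml)) : Prop :=
  match p with
  | [] => True
  | (b, C) :: q => In (b, C) (diamonds F) /\ path C q
  end.

Fixpoint target (F : fml) (p : list (idx * fml)) : fml :=
  match p with
  | [] => F
  | (_, C) :: q => target C q
  end.

Lemma path_app F w v : path F (w ++ v) <-> path F w /\ path (target F w) v.
Proof.
  revert F; induction w as [|[b C] w IH]; intros F; simpl.
  - tauto.
  - rewrite IH; tauto.
Qed.

Lemma target_app F w v : target F (w ++ v) = target (target F w) v.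
Proof. revert F; induction w as [|[b C] w IH]; intros F; simpl; auto. Qed.

Definition reach (b : idx) (s t : list (idx * fml)) : Prop :=
  exists w u v, s = w ++ u /\ t = w ++ v /\ v <> [] /\
    Forall (fun p => idx_lt b (fst p)) u /\
    Forall (fun p => idx_le b (fst p)) v /\ path A0 t.

Lemma app_not_nil {T : Type} (l m : list T) : m <> [] -> l ++ m <> [].
Proof. intros H E; apply app_eq_nil in E; tauto. Qed.

Lemma reach_antimono a b s t : idx_le b a -> reach a s t -> reach b s t.
Proof.
  intros Hba [w [u [v [Hs [Ht [Hv [Fu [Fv Hp]]]]]]]].
  exists w, u, v; repeat split; auto.
  - eapply Forall_impl; [|exact Fu]; intros p Hp'; eapply idx_le_lt_trans; eauto.
  - eapply Forall_impl; [|exact Fv]; intros p Hp'; eapply idx_le_trans; eauto.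
Qed.

Lemma reach_trans b s t z : reach b s t -> reach b t z -> reach b s z.
Proof.
  intros [w1 [u1 [v1 [Hs [Ht [Hv1 [Fu1 [Fv1 _]]]]]]]]
         [w2 [u2 [v2 [Ht' [Hz [Hv2 [Fu2 [Fv2 Hp]]]]]]]].
  subst s z; rewrite Ht in Ht'.
  apply app_eq_app in Ht' as [d [[E1 E2]|[E1 E2]]]; subst.
  - (* t = w2 ++ d ++ v1: the cut point of the second step lies before v1 *)
    apply Forall_app in Fu2 as [Fd _].
    exists w2, (d ++ u1), v2; rewrite app_assoc; repeat split; auto.
    apply Forall_app; auto.
  - (* t = w1 ++ d ++ u2 with d ++ u2 = v1 *)
    apply Forall_app in Fv1 as [Fd _].
    exists w1, u1, (d ++ v2); rewrite <- app_assoc in *; repeat split; auto.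
    + apply app_not_nil; auto.
    + apply Forall_app; auto.
Qed.

Lemma reach_poly a b s t z :
  idx_lt b a -> reach a s t -> reach b s z -> reach b t z.
Proof.
  intros Hba [w1 [u1 [v1 [Hs [Ht [Hv1 [Fu1 [Fv1 _]]]]]]]]
         [w2 [u2 [v2 [Hs' [Hz [Hv2 [Fu2 [Fv2 Hp]]]]]]]].
  subst s t z.
  assert (Fv1b : Forall (fun p => idx_lt b (fst p)) v1).
  { eapply Forall_impl; [|exact Fv1]; intros p Hp'; eapply idx_lt_le_trans; eauto. }
  apply app_eq_app in Hs' as [d [[E1 E2]|[E1 E2]]]; subst.
  - apply Forall_app in Fu2 as [Fd _].
    exists w2, (d ++ v1), v2; rewrite app_assoc; repeat split; auto.
    apply Forall_app; auto.
  - apply Forall_app in Fu1 as [Fd _].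
    exists w1, v1, (d ++ v2); rewrite <- app_assoc in *; repeat split; auto.
    + apply app_not_nil; auto.
    + apply Forall_app; split; auto.
      eapply Forall_impl; [|exact Fd]; intros p Hp'; left; eapply idx_lt_trans; eauto.
Qed.

Notation forces_path := (forces (list (idx * fml)) reach).

Lemma forces_target F : forall w, path A0 w ->
  incl (diamonds F) (diamonds (target A0 w)) -> forces_path w F.
Proof.
  induction F as [| | F1 IH1 F2 IH2 | i F IH]; intros w Hw Hincl; simpl; auto.
  - apply incl_app_inv in Hincl as [H1 H2]; auto.
  - assert (Hw' : path A0 (w ++ [(i, F)])).
    { apply path_app; simpl; repeat split; auto; apply Hincl; simpl; auto. }
    exists (w ++ [(i, F)]); split.
    + exists w, [], [(i, F)]; rewrite app_nil_r; repeat split; auto.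
      * discriminate.
      * constructor; [right; reflexivity|constructor].
    + apply IH; auto; rewrite target_app; simpl; apply incl_refl.
Qed.

Lemma reach_keeps_entry b C w v z :
  reach b (w ++ (b, C) :: v) z ->
  exists v', z = w ++ (b, C) :: v' /\ v' <> [] /\ path A0 z.
Proof.
  intros [w2 [u2 [v2 [E [Ez [Hv2 [Fu2 [_ Hz]]]]]]]].
  apply app_eq_app in E as [l [[E1 E2]|[E1 E2]]].
  - subst u2; apply Forall_app in Fu2 as [_ Fb].
    apply Forall_inv, idx_lt_irrefl in Fb as [].
  - destruct l as [|p l]; simpl in E2.
    + subst u2; apply Forall_inv, idx_lt_irrefl in Fu2 as [].
    + inversion E2; subst.
      exists (l ++ v2); rewrite <- app_assoc in Hz |- *; simpl.
      repeat split; auto; apply app_not_nil; auto.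
Qed.

Definition no_return (F : fml) : Prop :=
  forall w v, path A0 (w ++ v) -> target A0 w = F -> v <> [] ->
    ~ forces_path (w ++ v) F.

Lemma no_return_step F :
  (forall b C, In (b, C) (diamonds F) -> no_return C) -> no_return F.
Proof.
  intros IH w v Hp Hend Hne Hforces.
  destruct v as [|[b C] v]; [congruence|].
  assert (Hin : In (b, C) (diamonds F)).
  { apply path_app in Hp as [_ [Hin _]]; rewrite Hend in Hin; exact Hin. }
  destruct (forces_diamonds _ _ _ _ _ _ Hforces Hin) as [z [Hz HzC]].
  destruct (reach_keeps_entry _ _ _ _ _ Hz) as [v' [-> [Hv' Hpz]]].
  apply (IH b C Hin (w ++ [(b, C)]) v'); rewrite <- ?app_assoc; auto.
  rewrite target_app, Hend; reflexivity.
Qed.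

Lemma no_return_diamonds F : forall b C, In (b, C) (diamonds F) -> no_return C.
Proof.
  induction F as [| | F1 IH1 F2 IH2 | i F IH]; simpl; intros b C Hin; try tauto.
  - apply in_app_or in Hin as [H|H]; eauto.
  - destruct Hin as [E|[]]; inversion E; subst; apply no_return_step; exact IH.
Qed.

End PathModel.

Theorem lemma6p1 : forall (A : fml) (a : idx), ~ RC A (Dia a A).
Proof.
  intros A a Hderiv.
  assert (Hroot : forces _ (reach A) [] A)
    by (apply forces_target; simpl; auto; apply incl_refl).
  apply (soundness _ _ (reach_antimono A) (reach_trans A) (reach_poly A)
           _ _ Hderiv) in Hroot.
  destruct Hroot as [t [[w [u [v [E1 [-> [Hne [_ [_ Hp]]]]]]]] Ht]].
  symmetry in E1; apply app_eq_nil in E1 as [-> ->].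
  exact (no_return_step A A (no_return_diamonds A A) [] v Hp eq_refl Hne Ht).
Qed.
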